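(* Let $N\ge 1$, let $\mathbf{A}=(A_{ij})\in\mathbb{R}^{N\times N}$ with $A_{ij}\ge 0$ for $i\neq j$ and $A_{ii}=0$, let $D_i=\sum_{j=1}^N A_{ij}$, $\mathbf{D}=\operatorname{diag}(D_1,\dots,D_N)$, let $\beta_1,\dots,\beta_N>0$, and set $\mathbf{H}=\mathbf{A}-\mathbf{D}-\operatorname{diag}(\beta_1,\dots,\beta_N)$. Then for all $k,m\in\{1,\dots,N\}$ and every positive integer $p$: $[\mathbf{H}^{-p}]_{km}\ge 0$ if $p$ is even and $[\mathbf{H}^{-p}]_{km}\le 0$ if $p$ is odd. Moreover, if $[\mathbf{H}^{-p}]_{km}=0$, then node $k$ cannot be reached from node $m$, i.e. there is no directed walk $m=w_0,w_1,\dots,w_n=k$ with $A_{w_{t+1}w_t}>0$ for all $t$.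
   Context: The directed graph associated with $\mathbf{A}$ has an edge from node $j$ to node $i$ iff $A_{ij}>0$. $\mathbf{H}$ is strictly diagonally dominant with negative diagonal, hence invertible. *)

From HB Require Import structures.
From mathcomp Require Import all_boot all_order all_algebra.
Set Implicit Arguments. Unset Strict Implicit. Unset Printing Implicit Defensive.
Import Order.TTheory GRing.Theory Num.Theory.
Local Open Scope ring_scope.

(* Nodes are 'I_n.+1, i.e. N = n.+1 >= 1 nodes. *)

Definition Dmat (R : realFieldType) (n : nat) (A : 'M[R]_n.+1) : 'M[R]_n.+1 :=
  diag_mx (\row_i \sum_j A i j).

Definition Hmat (R : realFieldType) (n : nat) (A : 'M[R]_n.+1)
  (beta : 'I_n.+1 -> R) : 'M[R]_n.+1 :=
  A - Dmat A - diag_mx (\row_i beta i).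

Definition edge_rel (R : realFieldType) (n : nat) (A : 'M[R]_n.+1) : rel 'I_n.+1 :=
  fun j i => 0 < A i j.

From HB Require Import structures.
From mathcomp Require Import all_boot all_order all_algebra.
From mathcomp Require Import ring.
Import Order.TTheory GRing.Theory Num.Theory.
Local Open Scope ring_scope.

(* -H = D + diag(beta) - A has nonpositive off-diagonal entries and strictly
   dominant positive diagonal, so it obeys a discrete minimum principle: if
   (-H) y >= 0 then y >= 0 (look at a row where y is minimal).  Hence -H is
   invertible with G := (-H)^-1 >= 0 entrywise, G_mm > 0, and positivity of
   column m of G spreads along the edges of the graph, so G_km > 0 whenever k
   is reachable from m.  Finally H^-p = (-1)^p G^p, and G^p >= 0 with
   (G^p)_km >= (G^(p-1))_km G_mm >= ... >= G_km G_mm^(p-1). *)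

Lemma connect_forward_closed (T : finType) (e : rel T) (P : pred T) :
  (forall x y, e x y -> P x -> P y) -> forall x y, connect e x y -> P x -> P y.
Proof.
move=> clP x _ /connectP[p e_p ->].
elim: p x e_p => //= y p IHp x /andP[e_xy e_p] Px.
exact: IHp e_p (clP _ _ e_xy Px).
Qed.

Section NonnegMatrixPowers.

Context {R : realFieldType} {n : nat}.
Variable G : 'M[R]_n.+1.
Hypothesis G_ge0 : forall i j, 0 <= G i j.

Lemma expmx_ge0 p i j : 0 <= (G ^+ p) i j.
Proof.
elim: p i j => [|p IHp] i j; first by rewrite expr0 mxE ler0n.
by rewrite exprSr -mulmxE mxE sumr_ge0 // => l _; rewrite mulr_ge0.
Qed.

Lemma expmx_gt0 p k m : 0 < G k m -> 0 < G m m -> 0 < (G ^+ p.+1) k m.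
Proof.
move=> Gkm_gt0 Gmm_gt0; elim: p => [|p IHp]; first by rewrite expr1.
rewrite exprSr -mulmxE mxE (bigD1 m) //= ltr_wpDr ?mulr_gt0 //.
by rewrite sumr_ge0 // => l _; rewrite mulr_ge0 ?expmx_ge0.
Qed.

End NonnegMatrixPowers.

Section OppHmat.

Context {R : realFieldType} {n : nat}.
Variables (A : 'M[R]_n.+1) (beta : 'I_n.+1 -> R).

Lemma mul_oppHmatE {q} (Y : 'M[R]_(n.+1, q)) i c :
  (\sum_l A i l + beta i) * Y i c =
  ((- Hmat A beta) *m Y) i c + \sum_l A i l * Y l c.
Proof.
have Hil l : (- Hmat A beta) i l * Y l c =
    (if l == i then (\sum_j A i j + beta i) * Y i c else 0) - A i l * Y l c.
  by rewrite !mxE eq_sym; case: eqVneq => [->|_]; rewrite ?mulr1n ?mulr0n; ring.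
rewrite mxE (eq_bigr _ (fun l _ => Hil l)) sumrB.
by rewrite -big_mkcond big_pred1_eq subrK.
Qed.

Hypotheses (A_ge0 : forall i j, 0 <= A i j) (beta_gt0 : forall i, 0 < beta i).

Lemma rowsum_beta_gt0 i : 0 < \sum_l A i l + beta i.
Proof. by rewrite ltr_wpDl // sumr_ge0. Qed.

Lemma oppHmat_min_principle {q} (Y : 'M[R]_(n.+1, q)) c :
  (forall i, 0 <= ((- Hmat A beta) *m Y) i c) -> forall i, 0 <= Y i c.
Proof.
move=> HY_ge0; have [r _ Yr_min] := @arg_minP _ R _ ord0 xpredT (Y ^~ c) isT.
suff Yr_ge0 : 0 <= Y r c by move=> i; exact: le_trans Yr_ge0 (Yr_min i isT).
have betaY : beta r * Y r c =
    ((- Hmat A beta) *m Y) r c + \sum_l A r l * (Y l c - Y r c).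
  rewrite (eq_bigr _ (fun l _ => mulrBr _ _ _)) sumrB -mulr_suml addrA.
  by rewrite -mul_oppHmatE; ring.
rewrite -(pmulr_rge0 _ (beta_gt0 r)) betaY addr_ge0 // sumr_ge0 // => l _.
by rewrite mulr_ge0 // subr_ge0 Yr_min.
Qed.

Lemma Hmat_unit : Hmat A beta \in unitmx.
Proof.
rewrite -row_full_unit -cokermx_eq0; set C := cokermx _.
have HC0 : (- Hmat A beta) *m C = 0 by rewrite mulNmx mulmx_coker oppr0.
have HNC0 : (- Hmat A beta) *m - C = 0 by rewrite mulmxN HC0 oppr0.
have C_ge0 i c : 0 <= C i c.
  by apply: oppHmat_min_principle => l; rewrite HC0 mxE.
have NC_ge0 i c : 0 <= (- C) i c.
  by apply: oppHmat_min_principle => l; rewrite HNC0 mxE.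
apply/eqP/matrixP => i c; rewrite [RHS]mxE; apply/eqP.
rewrite eq_le C_ge0 andbT -oppr_ge0.
by have := NC_ge0 i c; rewrite [(- C) i c]mxE.
Qed.

Section Column.

Context {q : nat} {Y : 'M[R]_(n.+1, q)} {c : 'I_q}.
Hypotheses (HY_ge0 : forall i, 0 <= ((- Hmat A beta) *m Y) i c)
           (Y_ge0 : forall i, 0 <= Y i c).

Lemma oppHmat_diag_gt0 i : 0 < ((- Hmat A beta) *m Y) i c -> 0 < Y i c.
Proof.
move=> HYi_gt0; rewrite -(pmulr_rgt0 _ (rowsum_beta_gt0 i)) mul_oppHmatE.
by rewrite ltr_wpDr // sumr_ge0 // => l _; rewrite mulr_ge0.
Qed.

Lemma oppHmat_edge_gt0 j i : edge_rel A j i -> 0 < Y j c -> 0 < Y i c.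
Proof.
rewrite /edge_rel => Aij_gt0 Yj_gt0.
rewrite -(pmulr_rgt0 _ (rowsum_beta_gt0 i)) mul_oppHmatE ltr_wpDl //.
rewrite (bigD1 j) //= ltr_wpDr ?mulr_gt0 // sumr_ge0 // => l _.
by rewrite mulr_ge0.
Qed.

Lemma oppHmat_connect_gt0 m k :
  connect (edge_rel A) m k -> 0 < Y m c -> 0 < Y k c.
Proof. exact: connect_forward_closed oppHmat_edge_gt0 m k. Qed.

End Column.

Definition Gmat : 'M[R]_n.+1 := - invmx (Hmat A beta).

Lemma mul_oppHmat_Gmat : (- Hmat A beta) *m Gmat = 1%:M.
Proof. by rewrite /Gmat mulNmx mulmxN opprK mulmxV ?Hmat_unit. Qed.

Lemma Gmat_ge0 i j : 0 <= Gmat i j.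
Proof.
by apply: oppHmat_min_principle => l; rewrite mul_oppHmat_Gmat mxE ler0n.
Qed.

Lemma Gmat_connect_gt0 m k : connect (edge_rel A) m k -> 0 < Gmat k m.
Proof.
have HG_ge0 l : 0 <= ((- Hmat A beta) *m Gmat) l m.
  by rewrite mul_oppHmat_Gmat mxE ler0n.
move=> /(oppHmat_connect_gt0 HG_ge0 (Gmat_ge0 ^~ m)); apply.
apply: (oppHmat_diag_gt0 (Gmat_ge0 ^~ m)).
by rewrite mul_oppHmat_Gmat mxE eqxx ltr01.
Qed.

Lemma invmx_Hmat_exp p k m :
  (invmx (Hmat A beta) ^+ p) k m = (-1) ^+ p * (Gmat ^+ p) k m.
Proof. by rewrite -[invmx _]opprK -scaleN1r exprZn mxE. Qed.

End OppHmat.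

Theorem lemma2 (R : realFieldType) (n : nat) (A : 'M[R]_n.+1)
  (beta : 'I_n.+1 -> R)
  (hoff : forall i j : 'I_n.+1, i != j -> 0 <= A i j)
  (hdiag : forall i : 'I_n.+1, A i i = 0)
  (hbeta : forall i : 'I_n.+1, 0 < beta i)
  (k m : 'I_n.+1) (p : nat) (hp : (0 < p)%N) :
  (~~ odd p -> 0 <= (invmx (Hmat A beta) ^+ p) k m) /\
  (odd p -> (invmx (Hmat A beta) ^+ p) k m <= 0) /\
  ((invmx (Hmat A beta) ^+ p) k m = 0 -> ~ connect (edge_rel A) m k).
Proof.
have A_ge0 i j : 0 <= A i j.
  by case: (eqVneq i j) => [->|/hoff//]; rewrite hdiag.
have G_ge0 := Gmat_ge0 A beta A_ge0 hbeta.
have G_gt0 := Gmat_connect_gt0 A beta A_ge0 hbeta.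
rewrite invmx_Hmat_exp -signr_odd; split; [|split].
- by move=> /negbTE->; rewrite mul1r expmx_ge0.
- by move=> ->; rewrite mulN1r oppr_le0 expmx_ge0.
- move=> /eqP; rewrite mulf_eq0 signr_eq0 /= => /eqP Gp0 m_to_k.
  case: p hp Gp0 => // p _; apply/eqP.
  by rewrite gt_eqF // expmx_gt0 ?G_gt0 ?connect0.
Qed.
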